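(* (i) Let $(H,\mathcal{R})$ be a quasitriangular Hopf algebra over a field $k$ with $H\neq k$. Then the functor ${}_H\mathcal{M}\to{}^H_H\mathcal{M}$ sending a left $H$-module $(V,\triangleright)$ to the crossed module $(V,\triangleright,\beta)$ with $\beta(v)=\mathcal{R}^{(2)}\otimes\mathcal{R}^{(1)}\triangleright v$, and acting as the identity on morphisms, is not an isomorphism of categories. (ii) Let $(H,\mathcal{R})$ be a dual quasitriangular Hopf algebra over $k$ with $H\neq k$. Then the functor ${}^H\mathcal{M}\to{}^H_H\mathcal{M}$ sending a left $H$-comodule $(V,\beta)$, $\beta(v)=v^{\bar{(1)}}\otimes v^{\bar{(2)}}$, to $(V,\beta,\triangleright)$ with $h\triangleright v=\mathcal{R}(v^{\bar{(1)}}\otimes h)v^{\bar{(2)}}$, and acting as the identity on morphisms, is not an isomorphism of categories.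
   Context: A quasitriangular Hopf algebra is a Hopf algebra $H$ with invertible $\mathcal{R}=\mathcal{R}^{(1)}\otimes\mathcal{R}^{(2)}\in H\otimes H$ (summation understood) with $(\Delta\otimes\mathrm{id})\mathcal{R}=\mathcal{R}_{13}\mathcal{R}_{23}$, $(\mathrm{id}\otimes\Delta)\mathcal{R}=\mathcal{R}_{13}\mathcal{R}_{12}$, $\Delta^{op}=\mathcal{R}(\Delta\,\cdot)\mathcal{R}^{-1}$. A dual quasitriangular Hopf algebra is a Hopf algebra with a convolution-invertible $\mathcal{R}:H\otimes H\to k$ satisfying $\mathcal{R}(hg\otimes f)=\mathcal{R}(h\otimes f_{(1)})\mathcal{R}(g\otimes f_{(2)})$, $\mathcal{R}(h\otimes gf)=\mathcal{R}(h_{(1)}\otimes f)\mathcal{R}(h_{(2)}\otimes g)$, $g_{(1)}h_{(1)}\mathcal{R}(h_{(2)}\otimes g_{(2)})=\mathcal{R}(h_{(1)}\otimes g_{(1)})h_{(2)}g_{(2)}$. ${}_H\mathcal{M}$ and ${}^H\mathcal{M}$ denote the categories of left $H$-modules and left $H$-comodules. ${}^H_H\mathcal{M}$ is the category of left crossed modules: vector spaces $V$ with a left $H$-action $\triangleright$ and a left $H$-coaction $v\mapsto v^{\bar{(1)}}\otimes v^{\bar{(2)}}\in H\otimes V$ satisfying $h_{(1)}v^{\bar{(1)}}\otimes h_{(2)}\triangleright v^{\bar{(2)}}=(h_{(1)}\triangleright v)^{\bar{(1)}}h_{(2)}\otimes(h_{(1)}\triangleright v)^{\bar{(2)}}$,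 with morphisms the linear maps intertwining both the action and the coaction. *)

(* Hopf algebras, (co)modules and crossed modules over a
   field k, with tensors represented as finite formal sums (lists of pairs /
   triples) whose equality is the equality in the algebraic tensor product,
   characterised by its universal property (equal images under every
   multilinear map into every k-vector space). *)
From HB Require Import structures.
From mathcomp Require Import all_boot all_order all_algebra.
Set Implicit Arguments. Unset Strict Implicit. Unset Printing Implicit Defensive.
Import GRing.Theory.
Local Open Scope ring_scope.

Section Defs.
Variable k : fieldType.

Definition lin (U W : lmodType k) (f : U -> W) : Prop :=
  forall (c : k) (x y : U), f (c *: x + y) = c *: f x + f y.

Definition bilin (A B W : lmodType k) (phi : A -> B -> W) : Prop :=
  (forall b, lin (fun a => phi a b)) /\ (forall a, lin (phi a)).

Definition trilin (A B C W : lmodType k) (phi : A -> B -> C -> W) : Prop :=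
  [/\ (forall b c, lin (fun a => phi a b c)),
      (forall a c, lin (fun b => phi a b c)) &
      (forall a b, lin (phi a b))].

(* s : seq (A * B) stands for  \sum_(p <- s) p.1 (x) p.2  in A (x) B *)
Definition teq2 (A B : lmodType k) (s t : seq (A * B)) : Prop :=
  forall (W : lmodType k) (phi : A -> B -> W), bilin phi ->
    \sum_(p <- s) phi p.1 p.2 = \sum_(p <- t) phi p.1 p.2.

Definition teq3 (A B C : lmodType k) (s t : seq (A * B * C)) : Prop :=
  forall (W : lmodType k) (phi : A -> B -> C -> W), trilin phi ->
    \sum_(p <- s) phi p.1.1 p.1.2 p.2 = \sum_(p <- t) phi p.1.1 p.1.2 p.2.

(* c * s  (scalar acting on the tensor s);  s + t is concatenation *)
Definition tscale (A B : lmodType k) (c : k) (s : seq (A * B)) : seq (A * B) :=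
  [seq (c *: p.1, p.2) | p <- s].

Section Hopf.
Variable H : algType k.

Definition tmul2 (s t : seq (H * H)) : seq (H * H) :=
  [seq (p.1 * q.1, p.2 * q.2) | p <- s, q <- t].

(* H <> k : H is not spanned by its unit *)
Definition nontrivial_hopf : Prop := exists h : H, forall c : k, h <> c%:A.

Record is_hopf (D : H -> seq (H * H)) (e : H -> k) (S : H -> H) : Prop := {
  hopf_D_lin : forall c x y, teq2 (D (c *: x + y)) (tscale c (D x) ++ D y);
  hopf_coassoc : forall h,
    teq3 [seq (q.1, q.2, p.2) | p <- D h, q <- D p.1]
         [seq (p.1, q.1, q.2) | p <- D h, q <- D p.2];
  hopf_e_lin : forall c x y, e (c *: x + y) = c * e x + e y;
  hopf_counitl : forall h, \sum_(p <- D h) e p.1 *: p.2 = h;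
  hopf_counitr : forall h, \sum_(p <- D h) e p.2 *: p.1 = h;
  hopf_D_mul : forall g h, teq2 (D (g * h)) (tmul2 (D g) (D h));
  hopf_D_1 : teq2 (D 1) [:: (1, 1)];
  hopf_e_mul : forall g h, e (g * h) = e g * e h;
  hopf_e_1 : e 1 = 1;
  hopf_S_lin : lin S;
  hopf_antipodel : forall h, \sum_(p <- D h) S p.1 * p.2 = (e h)%:A;
  hopf_antipoder : forall h, \sum_(p <- D h) p.1 * S p.2 = (e h)%:A }.

Record is_quasitriangular (D : H -> seq (H * H)) (R : seq (H * H)) : Prop := {
  qt_inv : exists Rinv : seq (H * H),
    [/\ teq2 (tmul2 R Rinv) [:: (1, 1)],
        teq2 (tmul2 Rinv R) [:: (1, 1)] &
        forall h, teq2 [seq (p.2, p.1) | p <- D h] (tmul2 (tmul2 R (D h)) Rinv)];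
  (* (D (x) id) R = R13 R23 *)
  qt_D1 : teq3 [seq (q.1, q.2, r.2) | r <- R, q <- D r.1]
               [seq (r.1, s.1, r.2 * s.2) | r <- R, s <- R];
  (* (id (x) D) R = R13 R12 *)
  qt_D2 : teq3 [seq (r.1, q.1, q.2) | r <- R, q <- D r.2]
               [seq (r.1 * s.1, s.2, r.2) | r <- R, s <- R] }.

(* R : H (x) H -> k, given as a bilinear form *)
Record is_dual_quasitriangular (D : H -> seq (H * H)) (e : H -> k)
    (R : H -> H -> k) : Prop := {
  dqt_bilin : (forall b c x y, R (c *: x + y) b = c * R x b + R y b) /\
              (forall a c x y, R a (c *: x + y) = c * R a x + R a y);
  dqt_inv : exists R' : H -> H -> k,
    [/\ (forall b c x y, R' (c *: x + y) b = c * R' x b + R' y b),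
        (forall a c x y, R' a (c *: x + y) = c * R' a x + R' a y),
        (forall h g, \sum_(p <- D h) \sum_(q <- D g) R p.1 q.1 * R' p.2 q.2
                       = e h * e g) &
        (forall h g, \sum_(p <- D h) \sum_(q <- D g) R' p.1 q.1 * R p.2 q.2
                       = e h * e g)];
  dqt_mull : forall h g f, R (h * g) f = \sum_(p <- D f) R h p.1 * R g p.2;
  dqt_mulr : forall h g f, R h (g * f) = \sum_(p <- D h) R p.1 f * R p.2 g;
  dqt_comm : forall g h,
    \sum_(p <- D g) \sum_(q <- D h) R q.2 p.2 *: (p.1 * q.1)
    = \sum_(q <- D h) \sum_(p <- D g) R q.1 p.1 *: (q.2 * p.2) }.

Definition is_module (V : lmodType k) (act : H -> V -> V) : Prop :=
  [/\ bilin act, (forall v, act 1 v = v) &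
      (forall g h v, act (g * h) v = act g (act h v))].

Definition is_comodule (D : H -> seq (H * H)) (e : H -> k)
    (V : lmodType k) (co : V -> seq (H * V)) : Prop :=
  [/\ (forall c x y, teq2 (co (c *: x + y)) (tscale c (co x) ++ co y)),
      (forall v, teq3 [seq (q.1, q.2, p.2) | p <- co v, q <- D p.1]
                      [seq (p.1, q.1, q.2) | p <- co v, q <- co p.2]) &
      (forall v, \sum_(p <- co v) e p.1 *: p.2 = v)].

Definition is_crossed_module (D : H -> seq (H * H)) (e : H -> k)
    (V : lmodType k) (act : H -> V -> V) (co : V -> seq (H * V)) : Prop :=
  [/\ is_module act, is_comodule D e co &
      forall h v,
        teq2 [seq (p.1 * q.1, act p.2 q.2) | p <- D h, q <- co v]
             [seq (q.1 * p.2, q.2) | p <- D h, q <- co (act p.1 v)]].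

Definition mod_hom (V W : lmodType k) (actV : H -> V -> V) (actW : H -> W -> W)
    (f : V -> W) : Prop :=
  lin f /\ forall h v, f (actV h v) = actW h (f v).

Definition comod_hom (V W : lmodType k) (coV : V -> seq (H * V))
    (coW : W -> seq (H * W)) (f : V -> W) : Prop :=
  lin f /\ forall v, teq2 [seq (p.1, f p.2) | p <- coV v] (coW (f v)).

Definition crossed_hom (V W : lmodType k) (actV : H -> V -> V)
    (coV : V -> seq (H * V)) (actW : H -> W -> W) (coW : W -> seq (H * W))
    (f : V -> W) : Prop :=
  mod_hom actV actW f /\ comod_hom coV coW f.

Definition QT_coact (R : seq (H * H)) (V : lmodType k) (act : H -> V -> V)
    (v : V) : seq (H * V) :=
  [seq (r.2, act r.1 v) | r <- R].

Definition DQT_act (R : H -> H -> k) (V : lmodType k) (co : V -> seq (H * V))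
    (h : H) (v : V) : V :=
  \sum_(p <- co v) R p.1 h *: p.2.

(* Since the functor does not
   change the underlying vector space, objects are compared over the same V;
   two crossed-module structures on V are equal when the actions agree and
   the coactions agree as elements of H (x) V. *)
Definition QT_functor_iso (D : H -> seq (H * H)) (e : H -> k)
    (R : seq (H * H)) : Prop :=
  [/\
      (forall (V : lmodType k) (act : H -> V -> V) (co : V -> seq (H * V)),
         is_crossed_module D e act co ->
         exists act' : H -> V -> V,
           [/\ is_module act', (forall h v, act' h v = act h v) &
               forall v, teq2 (QT_coact R act' v) (co v)]),
      (forall (V : lmodType k) (act1 act2 : H -> V -> V),
         is_module act1 -> is_module act2 ->
         (forall h v, act1 h v = act2 h v) ->
         (forall v, teq2 (QT_coact R act1 v) (QT_coact R act2 v)) ->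
         forall h v, act1 h v = act2 h v) &
      (* bijective on morphisms (the functor is the identity on maps) *)
      (forall (V W : lmodType k) (actV : H -> V -> V) (actW : H -> W -> W)
              (f : V -> W),
         is_module actV -> is_module actW ->
         (mod_hom actV actW f <->
          crossed_hom actV (QT_coact R actV) actW (QT_coact R actW) f))].

Definition DQT_functor_iso (D : H -> seq (H * H)) (e : H -> k)
    (R : H -> H -> k) : Prop :=
  [/\
      (forall (V : lmodType k) (act : H -> V -> V) (co : V -> seq (H * V)),
         is_crossed_module D e act co ->
         exists co' : V -> seq (H * V),
           [/\ is_comodule D e co', (forall v, teq2 (co' v) (co v)) &
               forall h v, DQT_act R co' h v = act h v]),
      (forall (V : lmodType k) (co1 co2 : V -> seq (H * V)),
         is_comodule D e co1 -> is_comodule D e co2 ->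
         (forall v, teq2 (co1 v) (co2 v)) ->
         (forall h v, DQT_act R co1 h v = DQT_act R co2 h v) ->
         forall v, teq2 (co1 v) (co2 v)) &
      (forall (V W : lmodType k) (coV : V -> seq (H * V)) (coW : W -> seq (H * W))
              (f : V -> W),
         is_comodule D e coV -> is_comodule D e coW ->
         (comod_hom coV coW f <->
          crossed_hom (DQT_act R coV) coV (DQT_act R coW) coW f))].

End Hopf.
End Defs.

From HB Require Import structures.
From mathcomp Require Import all_boot all_order all_algebra.
Set Implicit Arguments. Unset Strict Implicit. Unset Printing Implicit Defensive.
Import GRing.Theory.
Local Open Scope ring_scope.

(* Neither functor is surjective on objects.  H carries two crossed-module
   structures: the adjoint action h |> v = h(1) v S(h(2)) with the coaction Δ,
   and the multiplication action with the coadjoint coaction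
   v |-> v(1) S(v(3)) ⊗ v(2); checking the Yetter-Drinfeld condition for them
   is where S being an anti-algebra and anti-coalgebra map is needed.
   (i) If Δ v = R^(2) ⊗ R^(1) |> v, applying id ⊗ e and e(h |> v) = e(h) e(v)
   gives v = e(v) c with c = e(R^(1)) R^(2), so H = k1.
   (ii) If h v = R(v^(1) ⊗ h) v^(2), then taking v = 1, whose coadjoint
   coaction is 1 ⊗ 1, gives h = R(1 ⊗ h) 1, so again H = k1. *)

Section Linearity.
Variable k : fieldType.
Implicit Types U W A B C : lmodType k.

Lemma lin0 U W (f : U -> W) : lin f -> f 0 = 0.
Proof.
move=> hf; have := hf 1 0 0; rewrite scaler0 addr0 scale1r => E.
by apply: (addIr (f 0)); rewrite add0r -E.
Qed.

Lemma linD U W (f : U -> W) x y : lin f -> f (x + y) = f x + f y.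
Proof. by move=> hf; have := hf 1 x y; rewrite !scale1r. Qed.

Lemma linZ U W (f : U -> W) c x : lin f -> f (c *: x) = c *: f x.
Proof. by move=> hf; have := hf c x 0; rewrite addr0 (lin0 hf) addr0. Qed.

Lemma lin_sum U W (f : U -> W) (I : Type) (s : seq I) (g : I -> U) :
  lin f -> f (\sum_(i <- s) g i) = \sum_(i <- s) f (g i).
Proof.
move=> hf; elim: s => [|a s IH]; first by rewrite !big_nil (lin0 hf).
by rewrite !big_cons (linD _ _ hf) IH.
Qed.

Lemma lin_id U : lin (fun a : U => a).
Proof. by []. Qed.

Lemma lin_scale U W (f : U -> W) c : lin f -> lin (fun a => c *: f a).
Proof. by move=> hf a x y; rewrite hf scalerDr !scalerA mulrC. Qed.

Lemma lin_bilin_l U A B W (phi : A -> B -> W) (f : U -> A) b :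
  bilin phi -> lin f -> lin (fun a => phi (f a) b).
Proof. by case=> hphi _ hf c x y; rewrite hf hphi. Qed.

Lemma lin_bilin_r U A B W (phi : A -> B -> W) (f : U -> B) a :
  bilin phi -> lin f -> lin (fun b => phi a (f b)).
Proof. by case=> _ hphi hf c x y; rewrite hf hphi. Qed.

Lemma lin_trilin1 U A B C W (phi : A -> B -> C -> W) (f : U -> A) b c :
  trilin phi -> lin f -> lin (fun a => phi (f a) b c).
Proof. by case=> hphi _ _ hf d x y; rewrite hf hphi. Qed.

Lemma lin_trilin2 U A B C W (phi : A -> B -> C -> W) (f : U -> B) a c :
  trilin phi -> lin f -> lin (fun b => phi a (f b) c).
Proof. by case=> _ hphi _ hf d x y; rewrite hf hphi. Qed.

Lemma lin_trilin3 U A B C W (phi : A -> B -> C -> W) (f : U -> C) a b :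
  trilin phi -> lin f -> lin (fun c => phi a b (f c)).
Proof. by case=> _ _ hphi hf d x y; rewrite hf hphi. Qed.

Lemma lin_mulr U (L : algType k) (f : U -> L) u : lin f -> lin (fun a => f a * u).
Proof. by move=> hf c x y; rewrite hf mulrDl scalerAl. Qed.

Lemma lin_mull U (L : algType k) (f : U -> L) u : lin f -> lin (fun a => u * f a).
Proof. by move=> hf c x y; rewrite hf mulrDr scalerAr. Qed.

End Linearity.

Section HopfAlgebra.
Variables (k : fieldType) (H : algType k).
Variables (D : H -> seq (H * H)) (e : H -> k) (S : H -> H).
Hypothesis hH : is_hopf D e S.
Implicit Types U W : lmodType k.

Lemma antipode_lin : lin S. Proof. exact: hopf_S_lin hH. Qed.

Lemma counit_lin : lin (e : H -> k^o).
Proof. exact: hopf_e_lin hH. Qed.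

Lemma counitM g h : e (g * h) = e g * e h. Proof. exact: (hopf_e_mul hH). Qed.

Lemma counit_alg c : e c%:A = c.
Proof. by rewrite (linZ _ _ counit_lin) (hopf_e_1 hH) [_ *: _]mulr1. Qed.

Lemma lin_antipode U (f : U -> H) : lin f -> lin (fun a => S (f a)).
Proof. by move=> hf c x y; rewrite hf antipode_lin. Qed.

Lemma lin_counit_scale U W (f : U -> H) (w : W) : lin f -> lin (fun a => e (f a) *: w).
Proof. by move=> hf c x y; rewrite hf (hopf_e_lin hH) scalerDl scalerA. Qed.

(* [Dsum h F] is F h(1) h(2) in Sweedler notation; [Dsum3], [Dsum4] and
   [Dsum5] iterate the coproduct on the last leg. *)
Definition Dsum W (h : H) (F : H -> H -> W) : W := \sum_(p <- D h) F p.1 p.2.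
Definition Dsum3 W h (F : H -> H -> H -> W) : W := Dsum h (fun a m => Dsum m (F a)).
Definition Dsum4 W h (F : H -> H -> H -> H -> W) : W :=
  Dsum h (fun a m => Dsum3 m (F a)).
Definition Dsum5 W h (F : H -> H -> H -> H -> H -> W) : W :=
  Dsum h (fun a m => Dsum4 m (F a)).

Definition multilin4 W (F : H -> H -> H -> H -> W) : Prop :=
  [/\ forall b c d, lin (fun a => F a b c d), forall a c d, lin (fun b => F a b c d),
      forall a b d, lin (fun c => F a b c d) & forall a b c, lin (fun d => F a b c d)].

Definition multilin5 W (F : H -> H -> H -> H -> H -> W) : Prop :=
  [/\ forall b c d f, lin (fun a => F a b c d f),
      forall a c d f, lin (fun b => F a b c d f),
      forall a b d f, lin (fun c => F a b c d f),
      forall a b c f, lin (fun d => F a b c d f) &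
      forall a b c d, lin (fun f => F a b c d f)].

Lemma Dsum_linear W (F : H -> H -> W) : bilin F -> lin (fun h => Dsum h F).
Proof.
move=> hF c x y; have [hF1 _] := hF.
rewrite /Dsum (hopf_D_lin hH c x y hF) big_cat big_map /= scaler_sumr.
by congr (_ + _); apply: eq_bigr => p _; rewrite (linZ _ _ (hF1 _)).
Qed.

Lemma lin_Dsum W W' (f : W -> W') h (F : H -> H -> W) :
  lin f -> f (Dsum h F) = Dsum h (fun a b => f (F a b)).
Proof. exact: lin_sum. Qed.

Lemma eq_Dsum W h (F G : H -> H -> W) :
  (forall a b, F a b = G a b) -> Dsum h F = Dsum h G.
Proof. by move=> FG; apply: eq_bigr => p _; apply: FG. Qed.

Lemma exchange_Dsum W h g (F : H -> H -> H -> H -> W) :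
  Dsum h (fun a b => Dsum g (F a b)) = Dsum g (fun c d => Dsum h (fun a b => F a b c d)).
Proof. exact: exchange_big. Qed.

Lemma Dsum_scale W h c (F : H -> H -> W) :
  Dsum h (fun a b => c *: F a b) = c *: Dsum h F.
Proof. by rewrite /Dsum scaler_sumr. Qed.

Lemma Dsum_mul W g h (F : H -> H -> W) : bilin F ->
  Dsum (g * h) F = Dsum g (fun a b => Dsum h (fun c d => F (a * c) (b * d))).
Proof. by move=> hF; rewrite /Dsum (hopf_D_mul hH g h hF) big_allpairs_dep. Qed.

Lemma Dsum1 W (F : H -> H -> W) : bilin F -> Dsum 1 F = F 1 1.
Proof. by move=> hF; rewrite /Dsum (hopf_D_1 hH hF) big_seq1. Qed.

Lemma Dsum_alg W c (F : H -> H -> W) : bilin F -> Dsum c%:A F = c *: F 1 1.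
Proof. by move=> hF; rewrite (linZ _ _ (Dsum_linear hF)) Dsum1. Qed.

Lemma Dsum_coassoc W h (F : H -> H -> H -> W) : trilin F ->
  Dsum h (fun a b => Dsum a (fun x y => F x y b)) = Dsum3 h F.
Proof. by move=> hF; have := hopf_coassoc hH h hF; rewrite !big_allpairs_dep. Qed.

Lemma Dsum_antipodel W h (G : H -> W) : lin G ->
  Dsum h (fun x y => G (S x * y)) = G (e h)%:A.
Proof. by move=> hG; rewrite -(hopf_antipodel hH h) (lin_sum _ _ hG). Qed.

Lemma Dsum_antipoder W h (G : H -> W) : lin G ->
  Dsum h (fun x y => G (x * S y)) = G (e h)%:A.
Proof. by move=> hG; rewrite -(hopf_antipoder hH h) (lin_sum _ _ hG). Qed.

Lemma Dsum_counitl W h (G : H -> W) : lin G -> Dsum h (fun x y => e x *: G y) = G h.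
Proof.
move=> hG; rewrite -{2}(hopf_counitl hH h) (lin_sum _ _ hG).
by apply: eq_bigr => p _; rewrite (linZ _ _ hG).
Qed.

Lemma Dsum_counitr W h (G : H -> W) : lin G -> Dsum h (fun x y => e y *: G x) = G h.
Proof.
move=> hG; rewrite -{2}(hopf_counitr hH h) (lin_sum _ _ hG).
by apply: eq_bigr => p _; rewrite (linZ _ _ hG).
Qed.

Lemma lin_comp_Dsum U W (f : U -> H) (F : H -> H -> W) :
  lin f -> bilin F -> lin (fun a => Dsum (f a) F).
Proof. by move=> hf hF c x y; rewrite hf (Dsum_linear hF). Qed.

Lemma lin_Dsum_fun U W h (G : U -> H -> H -> W) :
  (forall x y, lin (fun a => G a x y)) -> lin (fun a => Dsum h (G a)).
Proof.
move=> hG c x y; rewrite /Dsum scaler_sumr -big_split /=.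
by apply: eq_bigr => p _; rewrite hG.
Qed.

Ltac solve_lin := cbv beta; lazymatch goal with
 | |- lin _ => first
   [ exact: lin_id
   | match goal with hyp : forall _, _ |- _ => eapply hyp; solve_lin end
   | eapply lin_comp_Dsum; solve_lin
   | eapply lin_Dsum_fun; solve_lin
   | eapply lin_mulr; solve_lin
   | eapply lin_mull; solve_lin
   | eapply lin_antipode; solve_lin
   | eapply lin_counit_scale; solve_lin
   | eapply lin_scale; solve_lin
   | eapply lin_bilin_l; [eassumption | solve_lin]
   | eapply lin_bilin_r; [eassumption | solve_lin]
   | eapply lin_trilin1; [eassumption | solve_lin]
   | eapply lin_trilin2; [eassumption | solve_lin]
   | eapply lin_trilin3; [eassumption | solve_lin] ]
 | |- forall _, _ => intro; solve_lin
 | |- _ => split; solve_lin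
 end.

Lemma Dsum3_linear W (F : H -> H -> H -> W) : trilin F -> lin (fun h => Dsum3 h F).
Proof. by move=> hF; apply: Dsum_linear; solve_lin. Qed.

Lemma Dsum4_split1 W h (F : H -> H -> H -> H -> W) : multilin4 F ->
  Dsum3 h (fun a b c => Dsum a (fun x y => F x y b c)) = Dsum4 h F.
Proof.
move=> [hF1 hF2 hF3 hF4].
transitivity (Dsum h (fun a m => Dsum a (fun x y => Dsum m (F x y)))).
  by apply: eq_Dsum => a m; rewrite exchange_Dsum.
by rewrite Dsum_coassoc //; solve_lin.
Qed.

Lemma Dsum4_split2 W h (F : H -> H -> H -> H -> W) : multilin4 F ->
  Dsum3 h (fun a b c => Dsum b (fun x y => F a x y c)) = Dsum4 h F.
Proof.
move=> [hF1 hF2 hF3 hF4]; apply: eq_Dsum => a m.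
by rewrite Dsum_coassoc //; solve_lin.
Qed.

Lemma Dsum5_split2 W h (F : H -> H -> H -> H -> H -> W) : multilin5 F ->
  Dsum4 h (fun a b c d => Dsum b (fun x y => F a x y c d)) = Dsum5 h F.
Proof.
move=> [hF1 hF2 hF3 hF4 hF5]; apply: eq_Dsum => a m.
by rewrite Dsum4_split1 //; solve_lin.
Qed.

Lemma Dsum5_split3 W h (F : H -> H -> H -> H -> H -> W) : multilin5 F ->
  Dsum4 h (fun a b c d => Dsum c (fun x y => F a b x y d)) = Dsum5 h F.
Proof.
move=> [hF1 hF2 hF3 hF4 hF5]; apply: eq_Dsum => a m.
by rewrite Dsum4_split2 //; solve_lin.
Qed.

Lemma Dsum3_antipodel23 W h (F : H -> H -> W) : bilin F ->
  Dsum3 h (fun x y z => F x (S y * z)) = F h 1.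
Proof.
move=> [hF1 hF2]; rewrite -[RHS](Dsum_counitr h (G := F^~ 1)) //.
apply: eq_Dsum => x m.
by rewrite (Dsum_antipodel m (hF2 x)) (linZ _ _ (hF2 x)).
Qed.

Lemma Dsum3_antipoder23 W h (F : H -> H -> W) : bilin F ->
  Dsum3 h (fun x y z => F x (y * S z)) = F h 1.
Proof.
move=> [hF1 hF2]; rewrite -[RHS](Dsum_counitr h (G := F^~ 1)) //.
apply: eq_Dsum => x m.
by rewrite (Dsum_antipoder m (hF2 x)) (linZ _ _ (hF2 x)).
Qed.

Lemma Dsum3_antipoder12 W h (F : H -> H -> W) : bilin F ->
  Dsum3 h (fun x y z => F (x * S y) z) = F 1 h.
Proof.
move=> hF; have [hF1 hF2] := hF; rewrite -Dsum_coassoc; last by solve_lin.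
rewrite -[RHS](Dsum_counitl h (hF2 1)).
apply: eq_Dsum => a b.
by rewrite (Dsum_antipoder a (hF1 b)) (linZ _ _ (hF1 b)).
Qed.

Lemma antipode1 : S 1 = 1.
Proof.
have := Dsum_antipodel 1 (@lin_id _ H).
by rewrite Dsum1 ?mulr1 ?(hopf_e_1 hH) ?scale1r //; solve_lin.
Qed.

Lemma counitS h : e (S h) = e h.
Proof.
have := congr1 e (hopf_antipodel hH h); rewrite counit_alg (lin_sum _ _ counit_lin) => <-.
rewrite -{1}(hopf_counitr hH h) (lin_sum _ _ antipode_lin) (lin_sum _ _ counit_lin).
by apply: eq_bigr => p _; rewrite counitM (linZ _ _ antipode_lin) (linZ _ _ counit_lin) mulrC.
Qed.

Lemma antipodeM g h : S (g * h) = S h * S g.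
Proof.
(* M = S(g(1) h(1)) g(2) h(2) S(h(3)) S(g(3)) collapses from the middle to
   S(gh), and from the left to S h S g. *)
pose M := Dsum3 g (fun a1 a2 g2 => Dsum3 h (fun b1 b2 h2 =>
            S (a1 * b1) * a2 * (b2 * S h2) * S g2)).
have -> : S (g * h) = M.
  transitivity (Dsum3 g (fun a1 a2 g2 => S (a1 * h) * (a2 * S g2))).
    by rewrite (Dsum3_antipoder23 _ (F := fun a u => S (a * h) * u)) ?mulr1 //; solve_lin.
  apply: eq_Dsum => a1 m; apply: eq_Dsum => a2 g2.
  rewrite (Dsum3_antipoder23 _ (F := fun b u => S (a1 * b) * a2 * u * S g2)); last by solve_lin.
  by rewrite mulr1 mulrA.
transitivity (Dsum g (fun g1 g2 => Dsum h (fun h1 h2 =>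
    Dsum g1 (fun a1 a2 => Dsum h1 (fun b1 b2 => S (a1 * b1) * (a2 * b2) * (S h2 * S g2)))))).
  rewrite /M -Dsum_coassoc; last by solve_lin.
  apply: eq_Dsum => g1 g2; rewrite exchange_Dsum; apply: eq_Dsum => a1 a2.
  rewrite -Dsum_coassoc; last by solve_lin.
  by apply: eq_Dsum => h1 h2; apply: eq_Dsum => b1 b2; rewrite !mulrA.
transitivity (Dsum g (fun g1 g2 => Dsum h (fun h1 h2 => (e g1 * e h1) *: (S h2 * S g2)))).
  apply: eq_Dsum => g1 g2; apply: eq_Dsum => h1 h2.
  rewrite -(Dsum_mul _ _ (F := fun x y => S x * y * (S h2 * S g2))); last by solve_lin.
  rewrite (Dsum_antipodel _ (G := fun u => u * (S h2 * S g2))); last by solve_lin.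
  by rewrite counitM mulr_algl.
transitivity (Dsum g (fun g1 g2 => e g1 *: (S h * S g2))).
  apply: eq_Dsum => g1 g2.
  rewrite -(Dsum_counitl h (G := fun y => S y * S g2)); last by solve_lin.
  by rewrite -Dsum_scale; apply: eq_Dsum => h1 h2; rewrite scalerA.
by rewrite (Dsum_counitl g (G := fun y => S h * S y)) //; solve_lin.
Qed.

Lemma Dsum_antipode W h (F : H -> H -> W) : bilin F ->
  Dsum (S h) F = Dsum h (fun a b => F (S b) (S a)).
Proof.
(* Both sides are convolution inverses of Δ: the five-fold sum is
   Δ(S h(1)) Δ(h(2)) (S h(4) ⊗ S h(3)), collapsed on the right or on the left. *)
move=> hF; have [hF1 hF2] := hF.
transitivity (Dsum5 h (fun u w1 w2 y z =>
    Dsum (S u) (fun a1 a2 => F (a1 * w1 * S z) (a2 * (w2 * S y))))).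
  transitivity (Dsum h (fun u m => e m *: Dsum (S u) F)).
    by rewrite (Dsum_counitr h (G := fun u => Dsum (S u) F)) //; solve_lin.
  apply: eq_Dsum => u m.
  transitivity (Dsum m (fun w1 z => Dsum (S u) (fun a1 a2 => F (a1 * (w1 * S z)) a2))).
    rewrite (Dsum_antipoder m (G := fun v => Dsum (S u) (fun a1 a2 => F (a1 * v) a2)));
      last by solve_lin.
    by rewrite -Dsum_scale; apply: eq_Dsum => a1 a2; rewrite mulr_algr (linZ _ _ (hF1 _)).
  apply: eq_Dsum => w1 m'.
  rewrite (Dsum3_antipoder12 _
    (F := fun v z => Dsum (S u) (fun a1 a2 => F (a1 * w1 * S z) (a2 * v)))); last by solve_lin.
  by apply: eq_Dsum => a1 a2; rewrite mulr1 mulrA.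
symmetry.
transitivity (Dsum3 h (fun x y z => e x *: F (S z) (S y))).
  rewrite -Dsum_coassoc; last by solve_lin.
  by apply: eq_Dsum => a b; rewrite Dsum_counitl //; solve_lin.
transitivity (Dsum3 h (fun x y z => Dsum x (fun u w => Dsum (S u) (fun a1 a2 =>
    Dsum w (fun b1 b2 => F (a1 * b1 * S z) (a2 * b2 * S y)))))).
  apply: eq_Dsum => x m; apply: eq_Dsum => y z.
  transitivity (Dsum x (fun u w => Dsum (S u * w) (fun t1 t2 => F (t1 * S z) (t2 * S y)))).
    rewrite (Dsum_antipodel x (G := fun v => Dsum v (fun t1 t2 => F (t1 * S z) (t2 * S y))));
      last by solve_lin.
    by rewrite Dsum_alg ?mul1r //; solve_lin.
  by apply: eq_Dsum => u w; rewrite Dsum_mul //; solve_lin.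
rewrite Dsum4_split1; last by solve_lin.
rewrite -Dsum5_split2; last by solve_lin.
apply: eq_Dsum => u m; apply: eq_Dsum => w m'; apply: eq_Dsum => y z.
by rewrite exchange_Dsum; apply: eq_Dsum => w1 w2; apply: eq_Dsum => a1 a2; rewrite !mulrA.
Qed.

Lemma Dsum3_mul W g h (F : H -> H -> H -> W) : trilin F ->
  Dsum3 (g * h) F =
  Dsum3 g (fun g1 g2 g3 => Dsum3 h (fun h1 h2 h3 => F (g1 * h1) (g2 * h2) (g3 * h3))).
Proof.
move=> hF; rewrite /Dsum3 Dsum_mul; last by solve_lin.
apply: eq_Dsum => a b; rewrite exchange_Dsum; apply: eq_Dsum => c d.
by rewrite Dsum_mul //; solve_lin.
Qed.

Definition adj (h v : H) : H := Dsum h (fun s t => s * v * S t).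

Lemma adj_module : is_module adj.
Proof.
split.
- by rewrite /adj; solve_lin.
- by move=> v; rewrite /adj Dsum1 ?antipode1 ?mul1r ?mulr1 //; solve_lin.
- move=> g h v; rewrite /adj Dsum_mul; last by solve_lin.
  apply: eq_Dsum => a1 a2; rewrite (@lin_Dsum _ _ (fun z => a1 * z * S a2)); last by solve_lin.
  by apply: eq_Dsum => b1 b2; rewrite antipodeM !mulrA.
Qed.

Lemma counit_adj h v : e (adj h v) = e v * e h.
Proof.
have hG : lin (fun u => e v *: (e u : k^o)) := lin_scale _ counit_lin.
rewrite /adj (lin_Dsum _ _ counit_lin).
transitivity (Dsum h (fun s t => e v *: (e (s * S t) : k^o))).
  by apply: eq_bigr => p _; rewrite !counitM mulrAC [_ *: _]mulrC.
by rewrite (Dsum_antipoder h hG) counit_alg.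
Qed.

Lemma adj_crossed : is_crossed_module D e adj D.
Proof.
split; first exact: adj_module.
  by split; [exact: hopf_D_lin hH | exact: hopf_coassoc hH | exact: hopf_counitl hH].
move=> h v W phi hphi; have [hphi1 hphi2] := hphi.
rewrite !big_allpairs_dep /=.
change (Dsum h (fun a b => Dsum v (fun x y => phi (a * x) (adj b y))) =
        Dsum h (fun a b => Dsum (adj a v) (fun x y => phi (x * b) y))).
transitivity (Dsum3 h (fun a s t => Dsum v (fun x y => phi (a * x) (s * y * S t)))).
  apply: eq_Dsum => a b; rewrite /adj exchange_Dsum.
  by apply: eq_Dsum => x y; rewrite (@lin_Dsum _ _ (phi (a * x))).
symmetry.
transitivity (Dsum3 h (fun s t b => Dsum s (fun s1 s2 => Dsum v (fun v1 v2 =>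
    Dsum t (fun t1 t2 => phi (s1 * v1 * S t2 * b) (s2 * v2 * S t1)))))).
  rewrite -Dsum_coassoc; last by solve_lin.
  apply: eq_Dsum => a b; rewrite /adj.
  rewrite (@lin_Dsum _ _ (fun z => Dsum z (fun x y => phi (x * b) y))); last by solve_lin.
  apply: eq_Dsum => s t; rewrite !Dsum_mul; try by solve_lin.
  by apply: eq_Dsum => s1 s2; apply: eq_Dsum => v1 v2; rewrite Dsum_antipode //; solve_lin.
transitivity (Dsum5 h (fun s1 s2 t1 t2 b =>
    Dsum v (fun v1 v2 => phi (s1 * v1 * (S t2 * b)) (s2 * v2 * S t1)))).
  rewrite Dsum4_split1; last by solve_lin.
  rewrite -Dsum5_split3; last by solve_lin.
  apply: eq_Dsum => s1 m; apply: eq_Dsum => s2 m'; apply: eq_Dsum => t b.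
  by rewrite exchange_Dsum; apply: eq_Dsum => t1 t2; apply: eq_Dsum => v1 v2; rewrite !mulrA.
apply: eq_Dsum => s1 m; apply: eq_Dsum => s2 m'.
rewrite (Dsum3_antipodel23 _
  (F := fun t1 u => Dsum v (fun v1 v2 => phi (s1 * v1 * u) (s2 * v2 * S t1)))); last by solve_lin.
by apply: eq_Dsum => v1 v2; rewrite mulr1.
Qed.

Lemma QT_functor_not_iso (R : seq (H * H)) : nontrivial_hopf H -> ~ QT_functor_iso D e R.
Proof.
move=> [h0 h0_nonscalar] [surj _ _].
have [act' [_ act'E coE]] := surj _ adj D adj_crossed.
set c := \sum_(r <- R) e r.1 *: r.2.
have scalar_c v : v = e v *: c.
  have hb : bilin (fun a b : H => e b *: a) by solve_lin.
  have := coE v _ _ hb; rewrite big_map /= (hopf_counitr hH) => E.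
  rewrite -{1}E /c scaler_sumr; apply: eq_bigr => r _.
  by rewrite act'E counit_adj scalerA.
have c1 : c = 1 by rewrite [RHS]scalar_c (hopf_e_1 hH) scale1r.
by apply: (h0_nonscalar (e h0)); rewrite {1}(scalar_c h0) c1.
Qed.

Definition coadj (v : H) : seq (H * H) :=
  [seq (p.1 * S q.2, q.1) | p <- D v, q <- D p.2].

Lemma sum_coadj W v (phi : H -> H -> W) :
  \sum_(p <- coadj v) phi p.1 p.2 = Dsum3 v (fun a x y => phi (a * S y) x).
Proof. exact: big_allpairs_dep. Qed.

Lemma coadj_comodule : is_comodule D e coadj.
Proof.
split.
- move=> c x y W phi hphi; have [hphi1 hphi2] := hphi.
  rewrite big_cat big_map /= (sum_coadj _ (fun a b => phi (c *: a) b)) !sum_coadj.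
  rewrite (Dsum3_linear (F := fun a x y => phi (a * S y) x)); last by solve_lin.
  congr (_ + _); rewrite -Dsum_scale; apply: eq_Dsum => a m.
  by rewrite -Dsum_scale; apply: eq_Dsum => x' y'; rewrite (linZ _ _ (hphi1 _)).
- move=> v W F hF; rewrite !big_allpairs_dep /=.
  change (Dsum3 v (fun a x y => Dsum (a * S y) (fun q1 q2 => F q1 q2 x)) =
          Dsum3 v (fun a x y => \sum_(q <- coadj x) F (a * S y) q.1 q.2)).
  transitivity (Dsum5 v (fun a1 a2 x y1 y2 => F (a1 * S y2) (a2 * S y1) x)).
    rewrite -[RHS]/(Dsum4 v (fun a1 a2 x y => Dsum y (fun y1 y2 => F (a1 * S y2) (a2 * S y1) x))).
    rewrite -Dsum4_split1; last by solve_lin.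
    apply: eq_Dsum => a m; apply: eq_Dsum => x y.
    rewrite Dsum_mul; last by solve_lin.
    by apply: eq_Dsum => a1 a2; rewrite Dsum_antipode //; solve_lin.
  rewrite -Dsum5_split3; last by solve_lin.
  rewrite -Dsum4_split2; last by solve_lin.
  by apply: eq_Dsum => a m; apply: eq_Dsum => x y; rewrite sum_coadj.
- move=> v; rewrite (sum_coadj _ (fun a b => e a *: b)).
  rewrite -[RHS](Dsum_counitl v (@lin_id _ H)); apply: eq_Dsum => a m.
  transitivity (e a *: Dsum m (fun x y => e y *: x)).
    by rewrite -Dsum_scale; apply: eq_Dsum => x y; rewrite counitM counitS scalerA.
  by rewrite (Dsum_counitr m (@lin_id _ H)).
Qed.

Lemma mul_coadj_crossed : is_crossed_module D e (fun h v => h * v) coadj.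
Proof.
split.
- by split; [solve_lin | exact: mul1r | move=> *; rewrite mulrA].
- exact: coadj_comodule.
move=> h v W phi hphi; have [hphi1 hphi2] := hphi.
rewrite !big_allpairs_dep /=.
change (Dsum h (fun a b => \sum_(q <- coadj v) phi (a * q.1) (b * q.2)) =
        Dsum h (fun a b => \sum_(q <- coadj (a * v)) phi (q.1 * b) q.2)).
transitivity (Dsum h (fun a b => Dsum3 v (fun x y z => phi (a * x * S z) (b * y)))).
  apply: eq_Dsum => a b; rewrite (sum_coadj _ (fun x y => phi (a * x) (b * y))).
  by apply: eq_Dsum => x m; apply: eq_Dsum => y z; rewrite mulrA.
transitivity (Dsum h (fun a b => Dsum3 (a * v) (fun x y z => phi (x * S z * b) y))); last first.
  by apply: eq_Dsum => a b; rewrite (sum_coadj _ (fun x y => phi (x * b) y)).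
symmetry.
transitivity (Dsum4 h (fun a1 a2 a3 b =>
    Dsum3 v (fun v1 v2 v3 => phi (a1 * v1 * S v3 * (S a3 * b)) (a2 * v2)))).
  rewrite -Dsum4_split2; last by solve_lin.
  rewrite -Dsum_coassoc; last by solve_lin.
  apply: eq_Dsum => a b; rewrite Dsum3_mul; last by solve_lin.
  apply: eq_Dsum => a1 m; apply: eq_Dsum => a2 a3.
  apply: eq_Dsum => v1 m'; apply: eq_Dsum => v2 v3.
  by rewrite antipodeM !mulrA.
apply: eq_Dsum => a1 m.
rewrite (Dsum3_antipodel23 _ (F := fun a2 u =>
  Dsum3 v (fun v1 v2 v3 => phi (a1 * v1 * S v3 * u) (a2 * v2)))); last by solve_lin.
by apply: eq_Dsum => v1 m'; apply: eq_Dsum => v2 v3; rewrite mulr1.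
Qed.

Lemma DQT_functor_not_iso (R : H -> H -> k) :
  is_dual_quasitriangular D e R -> nontrivial_hopf H -> ~ DQT_functor_iso D e R.
Proof.
move=> [[R_lin1 _] _ _ _ _] [h0 h0_nonscalar] [surj _ _].
have [co' [_ co'E actE]] := surj _ (fun h v => h * v) coadj mul_coadj_crossed.
have R_lin_scale (f : H -> H) b (w : H) : lin f -> lin (fun a => R (f a) b *: w).
  by move=> hf c x y; rewrite hf R_lin1 scalerDl scalerA.
have hb : bilin (fun a b : H => R a h0 *: b) by solve_lin.
have := actE h0 1.
rewrite /DQT_act mulr1 (co'E 1 _ _ hb) (sum_coadj _ (fun a b => R a h0 *: b)).
rewrite /Dsum3 Dsum1; last by solve_lin.
rewrite Dsum1; last by solve_lin.
by move=> /esym /h0_nonscalar.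
Qed.

End HopfAlgebra.

Theorem proposition4p1 :
  (forall (k : fieldType) (H : algType k) (D : H -> seq (H * H)) (e : H -> k)
          (S : H -> H) (R : seq (H * H)),
     is_hopf D e S -> is_quasitriangular D R -> nontrivial_hopf H ->
     ~ QT_functor_iso D e R) /\
  (forall (k : fieldType) (H : algType k) (D : H -> seq (H * H)) (e : H -> k)
          (S : H -> H) (R : H -> H -> k),
     is_hopf D e S -> is_dual_quasitriangular D e R -> nontrivial_hopf H ->
     ~ DQT_functor_iso D e R).
Proof.
split=> k H D e S R hopf.
- by move=> _; exact: QT_functor_not_iso hopf R.
- exact: DQT_functor_not_iso hopf R.
Qed.
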